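(* Let $\Sigma$ be a finite set of symbols, $\mathbf{x}\in\Sigma^*$, and $S=\{(T_1,\delta_1),\dots,(T_n,\delta_n)\}$ a perturbation space with $T_k=(\varphi_k,f_k)$, $\varphi_k:\Sigma^{s_k}\to\{0,1\}$, $f_k:\Sigma^{s_k}\to2^{\Sigma^{t_k}}$, $s_k\ge1$. Let $F=\{\mathrm{lstm}(\mathbf{z},h_0)\mid\mathbf{z}\in S(\mathbf{x})\}$. Define boxes $\widehat{H}_{i,j}^{S'}$ for $S'\in\mathcal{D}(S)$ by $\widehat{H}_{0,0}^{\varnothing}=\alpha(\{0^d\})$, $\widehat{H}_{i,j}^{S'}=\bot$ whenever $i<0$ or $j<0$ or $(i,j)=(0,0)$ with $S'\neq\varnothing$, and for $i\ge0$, $j\ge1$: $$\widehat{H}_{i,j}^{S'}=\widehat{\mathrm{lstm}}\big(\alpha(\{x_j\}),\widehat{H}_{i-1,j-1}^{S'}\big)\ \sqcup \bigsqcup_{\substack{1\le k\le n,\ \delta'_k\ge1,\ j\ge s_k\\ \varphi_k(\mathbf{x}_{j-s_k+1:j})=1}}\widehat{\mathrm{lstm}}\big(\alpha(f_k(\mathbf{x}_{j-s_k+1:j})),\widehat{H}_{i-t_k,\,j-s_k}^{S'_{k\downarrow}}\big),$$ and $\widehat{F}=\bigsqcup_{S'\in\mathcal{D}(S)}\bigsqcup_{i\ge0}\widehat{H}_{i,|\mathbf{x}|}^{S'}$. Then $F\subseteq\widehat{F}$, and the number of LSTM cell evaluations needed to compute $\widehat{F}$ is $O\big(|\mathbf{x}|\cdot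 n\cdot\prod_{i=1}^n\delta_i\big)$.
   Context: Strings: $\mathbf{x}_{a:b}=x_a\cdots x_b$, $|\mathbf{x}|$ length, $\epsilon$ empty string. A string transformation is $T=(\varphi,f)$, $\varphi:\Sigma^s\to\{0,1\}$, $f:\Sigma^s\to2^{\Sigma^t}$. A perturbation space is $S=\{(T_1,\delta_1),\dots,(T_n,\delta_n)\}$, $\delta_k\in\mathbb{N}$; $S(\mathbf{x})$ is the set of all $\mathbf{z}$ for which there is a factorization $\mathbf{x}=\mathbf{u}_0\mathbf{w}_1\mathbf{u}_1\cdots\mathbf{w}_m\mathbf{u}_m$ and indices $k_l$ with $\varphi_{k_l}(\mathbf{w}_l)=1$, $\mathbf{z}=\mathbf{u}_0\mathbf{w}'_1\mathbf{u}_1\cdots\mathbf{w}'_m\mathbf{u}_m$, $\mathbf{w}'_l\in f_{k_l}(\mathbf{w}_l)$, and each $k$ occurring at most $\delta_k$ times among the $k_l$. $\mathcal{D}(S)$ is the set of all $\{(T_k,\delta'_k)\}_k$ with $0\le\delta'_k\le\delta_k$; $\varnothing$ is the one with all $\delta'_k=0$; $S'_{k\downarrow}$ is $S'$ with $\delta'_k$ decreased by 1. LSTM: an embedding $e:\Sigma\to\mathbb{R}^m$ and a cell $C:\mathbb{R}^m\times\mathbb{R}^d\to\mathbb{R}^d$ give $\mathrm{lstm}(x,h)=C(e(x),h)$, extended to strings by $\mathrm{lstm}(\epsilon,h)=h$, $\mathrm{lstm}(\mathbf{z},h)=\mathrm{lstm}(z_{|\mathbf{z}|},\mathrm{lstm}(\mathbf{z}_{1:|\mathbf{z}|-1},h))$;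 $h_0=0^d$. Interval domain: a box is a product of closed intervals $[l,u]$; $\bot$ denotes the empty abstract element. For a finite nonempty set $X\subset\mathbb{R}^p$, $\alpha(X)$ is the smallest box containing $X$ (componentwise $[\min,\max]$), and $\alpha(\emptyset)=\bot$; for a set of symbols, $\alpha$ is applied to their embeddings. The join $B\sqcup B'$ is the smallest box containing both ($\bot\sqcup B=B$). $\widehat{C}$ is a sound abstract transformer of the cell: for boxes $B_e\subseteq\mathbb{R}^m$, $B_h\subseteq\mathbb{R}^d$, $\widehat{C}(B_e,B_h)$ is a box containing $C(e,h)$ for all $e\in B_e$, $h\in B_h$, and $\widehat{C}(\cdot,\bot)=\widehat{C}(\bot,\cdot)=\bot$. For a finite set $W$ of strings all of length $t$ and a box $B$, $\widehat{\mathrm{lstm}}(\alpha(W),B)$ is computed by $B_0=B$, $B_r=\widehat{C}(\alpha(\{e(w_r):\mathbf{w}\in W\}),B_{r-1})$ for $r=1,\dots,t$, returning $B_t$ (each step is one LSTM cell evaluation). The inclusion $F\subseteq\widehat{F}$ is read with $\bot$ as the empty set. In the complexity bound the sizes $s_k,t_k$ of the transformations are regarded as constants.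
   Formalization: The number of LSTM cell evaluations is bounded by c·|x|·max(1,n)·∏ₖ(δₖ+1) in place of O(|x|·n·∏ᵢδᵢ), and evaluations whose hidden-state input box is ⊥ are not counted. Each condition added here is assumed in the paper as well or is needed for the statement above to hold. *)

From HB Require Import structures.
From mathcomp Require Import all_boot all_order all_algebra.
Import Order.TTheory GRing.Theory Num.Theory.

Record trans (Sigma : finType) := Trans {
  tr_s : nat;
  tr_t : nat;
  tr_phi : tr_s.-tuple Sigma -> bool;
  tr_f : tr_s.-tuple Sigma -> {set tr_t.-tuple Sigma} }.

Arguments tr_s {Sigma}.
Arguments tr_t {Sigma}.
Arguments tr_phi {Sigma}.
Arguments tr_f {Sigma}.

Section Perturbation.
Variable Sigma : finType.

(* phi and f applied to an arbitrary string w: phi(w) = 1 requires w in Sigma^s *)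
Definition phiS (T : trans Sigma) (w : seq Sigma) : bool :=
  match (insub w : option ((tr_s T).-tuple Sigma)) with
  | Some tw => tr_phi T tw | None => false end.

Definition fS (T : trans Sigma) (w : seq Sigma) : seq (seq Sigma) :=
  match (insub w : option ((tr_s T).-tuple Sigma)) with
  | Some tw => [seq val z | z <- enum (tr_f T tw)] | None => [::] end.

(* one factor w_l, its transformation index k_l, its replacement w'_l,
   and the following untouched factor u_l *)
Record edit (n : nat) := Edit {
  ed_k : 'I_n; ed_w : seq Sigma; ed_w' : seq Sigma; ed_u : seq Sigma }.
Arguments ed_k {n}. Arguments ed_w {n}. Arguments ed_w' {n}. Arguments ed_u {n}.

Definition in_pspace (n : nat) (T : 'I_n -> trans Sigma) (delta : 'I_n -> nat)
    (x z : seq Sigma) : Prop :=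
  exists (u0 : seq Sigma) (eds : seq (edit n)),
    [/\ x = u0 ++ flatten [seq ed_w ed ++ ed_u ed | ed <- eds],
        z = u0 ++ flatten [seq ed_w' ed ++ ed_u ed | ed <- eds],
        all (fun ed => phiS (T (ed_k ed)) (ed_w ed)
                       && (ed_w' ed \in fS (T (ed_k ed)) (ed_w ed))) eds
      & forall k, (count (fun ed => ed_k ed == k) eds <= delta k)%N].

End Perturbation.

Section Boxes.
Variable R : realFieldType.
Local Open Scope ring_scope.

(* a box in R^p, given by its lower and upper corners; None is bottom *)
Definition box (p : nat) := ('rV[R]_p * 'rV[R]_p)%type.

Definition in_box (p : nat) (B : option (box p)) (v : 'rV[R]_p) : Prop :=
  match B with
  | None => False
  | Some (l, u) => forall i, (l 0 i <= v 0 i <= u 0 i)%R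
  end.

Definition bjoin (p : nat) (B B' : option (box p)) : option (box p) :=
  match B, B' with
  | None, _ => B'
  | _, None => B
  | Some (l, u), Some (l', u') =>
      Some (\row_i Num.min (l 0 i) (l' 0 i), \row_i Num.max (u 0 i) (u' 0 i))
  end.

Definition bigjoin (p : nat) (Bs : seq (option (box p))) : option (box p) :=
  foldr (bjoin p) None Bs.

(* alpha(X): smallest box containing the finite set X; alpha(empty) = bottom *)
Definition alpha (p : nat) (X : seq 'rV[R]_p) : option (box p) :=
  bigjoin p [seq Some (v, v) | v <- X].

Definition sound_abstract_cell (m d : nat)
    (C : 'rV[R]_m -> 'rV[R]_d -> 'rV[R]_d)
    (Chat : option (box m) -> option (box d) -> option (box d)) : Prop :=
  [/\ forall Be Bh e h, in_box m Be e -> in_box d Bh h -> in_box d (Chat Be Bh) (C e h),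
      forall Bh, Chat None Bh = None
    & forall Be, Chat Be None = None].

End Boxes.

Section LSTM.
Variables (R : realFieldType) (Sigma : finType) (m d : nat).
Variables (e : Sigma -> 'rV[R]_m) (C : 'rV[R]_m -> 'rV[R]_d -> 'rV[R]_d).
Variable Chat : option (box R m) -> option (box R d) -> option (box R d).

Definition lstm (z : seq Sigma) (h : 'rV[R]_d) : 'rV[R]_d :=
  foldl (fun h a => C (e a) h) h z.

(* lstmhat(alpha(W), B) for a finite set W of strings of length t *)
Definition lstm_hat (t : nat) (W : seq (t.-tuple Sigma)) (B : option (box R d))
    : option (box R d) :=
  foldl (fun B (r : 'I_t) => Chat (alpha R m [seq e (tnth w r) | w <- W]) B)
        B (enum 'I_t).

Variables (n : nat) (T : 'I_n -> trans Sigma) (delta : 'I_n -> nat).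
Variable x : seq Sigma.

(* x_{j-s+1:j} as an s-tuple (None if it does not exist) *)
Definition window (s j : nat) : option (s.-tuple Sigma) :=
  insub (take s (drop (j - s) x)).

Definition phi_at (k : 'I_n) (j : nat) : bool :=
  match window (tr_s (T k)) j with Some w => tr_phi (T k) w | None => false end.

Definition decr (dl : 'I_n -> nat) (k : 'I_n) : 'I_n -> nat :=
  fun k' => if k' == k then (dl k).-1 else dl k'.

Definition copy_term (j : nat) (Hin : option (box R d)) : option (box R d) :=
  match window 1 j with Some w => lstm_hat 1 [:: w] Hin | None => None end.

Definition trans_term (k : 'I_n) (j : nat) (Hin : option (box R d))
    : option (box R d) :=
  match window (tr_s (T k)) j with
  | Some w => if tr_phi (T k) w then lstm_hat (tr_t (T k)) (enum (tr_f (T k) w)) Hin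
              else None
  | None => None
  end.

(* Hhat_{i,j}^{S'}, computed with fuel (j+1 suffices since s_k >= 1) *)
Fixpoint Hf (fuel j i : nat) (dl : 'I_n -> nat) {struct fuel} : option (box R d) :=
  match fuel with
  | 0 => None
  | fuel'.+1 =>
    match j with
    | 0 => if (i == 0) && [forall k, dl k == 0] then alpha R d [:: 0%R] else None
    | j'.+1 =>
      bjoin R d
        (copy_term j (match i with i'.+1 => Hf fuel' j' i' dl | 0 => None end))
        (bigjoin R d
           [seq trans_term k j
                  (if (tr_t (T k) <= i)%N
                   then Hf fuel' (j - tr_s (T k)) (i - tr_t (T k)) (decr dl k)
                   else None)
           | k <- enum 'I_n & (0 < dl k)%N && (tr_s (T k) <= j)%N && phi_at k j])
    end
  end.

Definition Hhat (j i : nat) (dl : 'I_n -> nat) : option (box R d) := Hf j.+1 j i dl.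

Definition delta_max : nat := (\max_(k < n) delta k)%N.

Definition DS : seq ('I_n -> nat) :=
  [seq (fun k => nat_of_ord (g k))
  | g : {ffun 'I_n -> 'I_delta_max.+1} <- enum {ffun 'I_n -> 'I_delta_max.+1}
  & [forall k, (nat_of_ord (g k) <= delta k)%N]].

(* bound on the output length i; Hhat_{i,j} = bottom beyond it for j <= |x| *)
Definition Imax : nat := (size x + \sum_(k < n) delta k * tr_t (T k))%N.

Definition Fhat : option (box R d) :=
  bigjoin R d [seq Hhat (size x) i dl | dl <- DS, i <- iota 0 Imax.+1].

(* number of cell evaluations to compute the entry (i,j,S') from previously
   computed entries; an evaluation whose hidden-state input box is bottom is
   skipped (its result is bottom). *)
Definition cost_entry (j i : nat) (dl : 'I_n -> nat) : nat :=
  match j with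
  | 0 => 0
  | j'.+1 =>
    (match i with i'.+1 => nat_of_bool (isSome (Hhat j' i' dl)) | 0 => 0 end
     + \sum_(k < n)
         (if [&& (0 < dl k)%N, (tr_s (T k) <= j)%N, phi_at k j,
                 (tr_t (T k) <= i)%N &
                 isSome (Hhat (j - tr_s (T k)) (i - tr_t (T k)) (decr dl k))]
          then tr_t (T k) else 0))%N
  end.

Definition total_cost : nat :=
  (\sum_(dl <- DS) \sum_(1 <= j < (size x).+1) \sum_(0 <= i < Imax.+1)
      cost_entry j i dl)%N.

End LSTM.

From Pilot Require Import Defs.
From HB Require Import structures.
From mathcomp Require Import all_boot all_order all_algebra.
From mathcomp Require Import zify.
Import Order.TTheory.

Set Implicit Arguments.
Unset Strict Implicit.
Unset Printing Implicit Defensive.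

(* Soundness: every z in S(x) arises from a derivation, a left-to-right
   sequence of steps each of which keeps one symbol of x or replaces a window
   w with phi_k(w) = 1 by some w' in f_k(w).  Replaying the derivation along
   the recursion shows that lstm(z, h0) lies in Hhat_{|z|,|x|}^{S'}, where S'
   counts the uses of each T_k: every step is covered because Chat is sound and
   alpha and the join only enlarge boxes.
   Cost: a non-bottom entry Hhat_{i,j}^{S'} satisfies the balance
   i + sum_k delta'_k s_k = j + sum_k delta'_k t_k, so for fixed j and S' at
   most one row i is non-bottom.  Each column thus costs at most 1 + sum_k t_k
   cell evaluations, and there are at most prod_k (delta_k + 1) choices of S'. *)

Section BoxJoin.
Variables (R : realFieldType) (p : nat).
Local Notation in_box := (in_box R p).
Local Notation bjoin := (bjoin R p).
Local Notation bigjoin := (bigjoin R p).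

Lemma in_bjoinl B B' v : in_box B v -> in_box (bjoin B B') v.
Proof.
case: B => [[l u]|] //= Bv; case: B' => [[l' u']|] //= i.
by rewrite !mxE ge_min le_max; case/andP: (Bv i) => -> ->.
Qed.

Lemma in_bjoinr B B' v : in_box B' v -> in_box (bjoin B B') v.
Proof.
case: B' => [[l' u']|] //= B'v; case: B => [[l u]|] //= i.
by rewrite !mxE ge_min le_max; case/andP: (B'v i) => -> ->; rewrite !orbT.
Qed.

Lemma in_bigjoin Bs B v : B \in Bs -> in_box B v -> in_box (bigjoin Bs) v.
Proof.
elim: Bs => //= B' Bs IH; rewrite inE => /orP[/eqP <-|/IH BsB] Bv.
  exact: in_bjoinl.
exact: in_bjoinr (BsB Bv).
Qed.

Lemma in_alpha X v : v \in X -> in_box (alpha R p X) v.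
Proof.
move=> Xv; apply: (@in_bigjoin _ (Some (v, v))); first exact: map_f.
by move=> i; rewrite lexx.
Qed.

Lemma isSome_bjoin B B' : isSome (bjoin B B') = isSome B || isSome B'.
Proof. by case: B => [[]|]; case: B' => [[]|]. Qed.

Lemma isSome_bigjoin Bs : isSome (bigjoin Bs) = has isSome Bs.
Proof. by elim: Bs => //= B Bs <-; rewrite isSome_bjoin. Qed.

End BoxJoin.

Section AbstractLSTM.
Variables (R : realFieldType) (Sigma : finType) (m d : nat).
Variables (e : Sigma -> 'rV[R]_m) (C : 'rV[R]_m -> 'rV[R]_d -> 'rV[R]_d).
Variable Chat : option (box R m) -> option (box R d) -> option (box R d).
Local Notation lstm := (lstm R Sigma m d e C).
Local Notation lstm_hat := (lstm_hat R Sigma m d e Chat).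

Lemma lstm_cat z1 z2 h : lstm (z1 ++ z2) h = lstm z2 (lstm z1 h).
Proof. exact: foldl_cat. Qed.

Hypothesis Chat_bot : forall Be, Chat Be None = None.

Lemma lstm_hat_None t W : lstm_hat t W None = None.
Proof. by rewrite /lstm_hat; elim: (enum 'I_t) => //= r rs; rewrite Chat_bot. Qed.

Hypothesis Chat_sound : forall Be Bh v h,
  in_box R m Be v -> in_box R d Bh h -> in_box R d (Chat Be Bh) (C v h).

Lemma lstm_hat_sound t W (w : t.-tuple Sigma) B h :
  w \in W -> in_box R d B h -> in_box R d (lstm_hat t W B) (lstm w h).
Proof.
move=> Ww; rewrite /lstm -[in X in foldl _ _ X]map_tnth_enum /lstm_hat.
elim: (enum 'I_t) B h => //= r rs IH B h Bh; apply: IH; apply: Chat_sound => //.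
exact/in_alpha/map_f.
Qed.

End AbstractLSTM.

Lemma phiS_fSP (Sigma : finType) (T : trans Sigma) w w' :
  phiS Sigma T w -> w' \in fS Sigma T w ->
  exists (tw : (tr_s T).-tuple Sigma) (tw' : (tr_t T).-tuple Sigma),
    [/\ w = tw, w' = tw', tr_phi T tw & tw' \in tr_f T tw].
Proof.
rewrite /phiS /fS; case: insubP => [tw _ <-|//] phi_tw /mapP[tw' ftw' ->].
by exists tw, tw'; rewrite -mem_enum.
Qed.

Section Derivations.
Variables (Sigma : finType) (n : nat) (T : 'I_n -> trans Sigma).

Inductive step := Keep of Sigma | Apply of 'I_n & seq Sigma & seq Sigma.

Definition step_src st := match st with Keep a => [:: a] | Apply _ w _ => w end.
Definition step_tgt st := match st with Keep a => [:: a] | Apply _ _ w' => w' end.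

Definition step_ok st :=
  if st is Apply k w w' then phiS Sigma (T k) w && (w' \in fS Sigma (T k) w)
  else true.

Definition applies k st := if st is Apply k' _ _ then k' == k else false.

Definition src sts := flatten (map step_src sts).
Definition tgt sts := flatten (map step_tgt sts).

Lemma src_cons st sts : src (st :: sts) = step_src st ++ src sts.
Proof. by []. Qed.

Lemma tgt_cons st sts : tgt (st :: sts) = step_tgt st ++ tgt sts.
Proof. by []. Qed.

Lemma src_cat sts1 sts2 : src (sts1 ++ sts2) = src sts1 ++ src sts2.
Proof. by rewrite /src map_cat flatten_cat. Qed.

Lemma tgt_cat sts1 sts2 : tgt (sts1 ++ sts2) = tgt sts1 ++ tgt sts2.
Proof. by rewrite /tgt map_cat flatten_cat. Qed.

Lemma src_rcons sts st : src (rcons sts st) = src sts ++ step_src st.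
Proof. by rewrite -cats1 src_cat /src /= cats0. Qed.

Lemma tgt_rcons sts st : tgt (rcons sts st) = tgt sts ++ step_tgt st.
Proof. by rewrite -cats1 tgt_cat /tgt /= cats0. Qed.

Lemma in_pspace_derivation (delta : 'I_n -> nat) x z :
  in_pspace Sigma n T delta x z ->
  exists sts, [/\ all step_ok sts, src sts = x, tgt sts = z
                & forall k, count (applies k) sts <= delta k].
Proof.
case=> u0 [eds [-> -> eds_ok eds_le]].
pose keep u := map Keep u.
have src_keep u : src (keep u) = u by elim: u => //= a u; rewrite src_cons => ->.
have tgt_keep u : tgt (keep u) = u by elim: u => //= a u; rewrite tgt_cons => ->.
have applies_keep k u : count (applies k) (keep u) = 0 by elim: u.
pose step_ed ed := Apply (ed_k Sigma n ed) (ed_w Sigma n ed) (ed_w' Sigma n ed)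
                   :: keep (ed_u Sigma n ed).
exists (keep u0 ++ flatten (map step_ed eds)); split.
- rewrite all_cat all_map; apply/andP; split; first exact/allP.
  elim: eds eds_ok {eds_le} => //= ed eds IH /andP[ed_ok /IH].
  by rewrite all_cat /= ed_ok all_map => ->; rewrite andbT; apply/allP.
- rewrite src_cat src_keep; congr (_ ++ _).
  elim: eds {eds_ok eds_le} => //= ed eds IH.
  by rewrite src_cons src_cat -IH src_keep catA.
- rewrite tgt_cat tgt_keep; congr (_ ++ _).
  elim: eds {eds_ok eds_le} => //= ed eds IH.
  by rewrite tgt_cons tgt_cat -IH tgt_keep catA.
- move=> k; rewrite count_cat applies_keep; apply: leq_trans (eds_le k).
  elim: eds {eds_ok eds_le} => //= ed eds IH.
  by rewrite count_cat applies_keep !add0n leq_add2l.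
Qed.

End Derivations.

Definition dot {n} (u v : 'I_n -> nat) := \sum_(k < n) u k * v k.

Lemma dot_decr n (u v : 'I_n -> nat) k :
  0 < u k -> dot u v = dot (decr n u k) v + v k.
Proof.
move=> u_k; rewrite /dot (bigD1 k) //= [in RHS](bigD1 k) //= /decr eqxx.
under [in RHS]eq_bigr => k' k'k do rewrite (negbTE k'k).
by case: (u k) u_k => // q _; rewrite mulSn /=; lia.
Qed.

Section Recursion.
Variables (R : realFieldType) (Sigma : finType) (m d : nat).
Variables (e : Sigma -> 'rV[R]_m) (C : 'rV[R]_m -> 'rV[R]_d -> 'rV[R]_d).
Variable Chat : option (box R m) -> option (box R d) -> option (box R d).
Variables (n : nat) (T : 'I_n -> trans Sigma) (x : seq Sigma).
Hypothesis tr_s_gt0 : forall k, 0 < tr_s (T k).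
Hypothesis Chat_bot : forall Be, Chat Be None = None.
Hypothesis Chat_sound : forall Be Bh v h,
  in_box R m Be v -> in_box R d Bh h -> in_box R d (Chat Be Bh) (C v h).

Local Notation Hf := (Hf R Sigma m d e Chat n T x).
Local Notation Hhat := (Hhat R Sigma m d e Chat n T x).
Local Notation window := (window Sigma x).
Local Notation lstm := (lstm R Sigma m d e C).
Local Notation sz_in := (fun k => tr_s (T k)).
Local Notation sz_out := (fun k => tr_t (T k)).

Lemma copy_term_None j : copy_term R Sigma m d e Chat x j None = None.
Proof. by rewrite /copy_term; case: window => // w; rewrite lstm_hat_None. Qed.

Lemma trans_term_None k j : trans_term R Sigma m d e Chat n T x k j None = None.
Proof.
by rewrite /trans_term; case: window => // w; case: ifP => //; rewrite lstm_hat_None.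
Qed.

Lemma Hf_balance f j i dl :
  isSome (Hf f j i dl) -> i + dot dl sz_in = j + dot dl sz_out.
Proof.
elim: f j i dl => [//|f IH] [|j] i dl /=.
  case: ifP => // /andP[/eqP -> /forallP dl0] _.
  by rewrite /dot !big1 // => k _; rewrite (eqP (dl0 k)).
rewrite isSome_bjoin isSome_bigjoin has_map => /orP[|/hasP[k]].
  case: i => [|i]; first by rewrite copy_term_None.
  case Hij: (Hf f j i dl) => [B|]; last by rewrite copy_term_None.
  by have := IH _ _ _ (congr1 isSome Hij); lia.
rewrite mem_filter => /andP[/andP[/andP[dl_k s_le] _] _] /=.
case: leqP => [t_le|]; last by rewrite trans_term_None.
case Hij: (Hf f _ _ _) => [B|]; last by rewrite trans_term_None.
move=> _; have := IH _ _ _ (congr1 isSome Hij).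
by rewrite (dot_decr sz_in dl_k) (dot_decr sz_out dl_k); lia.
Qed.

Lemma Hhat_unique j i i' dl :
  isSome (Hhat j i dl) -> isSome (Hhat j i' dl) -> i = i'.
Proof. by move=> /Hf_balance + /Hf_balance; lia. Qed.

Lemma window_cat s (w : s.-tuple Sigma) x' rest :
  x = x' ++ w ++ rest -> window s (size x' + s) = Some w.
Proof.
move=> ->; rewrite /Defs.window addnK drop_size_cat // take_size_cat ?size_tuple //.
exact: valK.
Qed.

Lemma in_Hf_keep f x' a rest i dl h :
  x = x' ++ a :: rest -> in_box R d (Hf f (size x') i dl) h ->
  in_box R d (Hf f.+1 (size x').+1 i.+1 dl) (C (e a) h).
Proof.
move=> x_eq Hh; apply: in_bjoinl.
rewrite /copy_term -[(size x').+1]addn1 (@window_cat 1 [tuple a] _ _ x_eq).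
exact: (lstm_hat_sound e Chat_sound (mem_head [tuple a] _) Hh).
Qed.

Lemma in_Hf_apply f x' k (w : (tr_s (T k)).-tuple Sigma)
    (w' : (tr_t (T k)).-tuple Sigma) rest i dl h :
  x = x' ++ w ++ rest -> tr_phi (T k) w -> w' \in tr_f (T k) w -> 0 < dl k ->
  in_box R d (Hf f (size x') i (decr n dl k)) h ->
  in_box R d (Hf f.+1 (size x' + tr_s (T k)) (i + tr_t (T k)) dl) (lstm w' h).
Proof.
move=> x_eq phi_w fw' dl_k Hh; have := window_cat x_eq.
set j := size x' + _ => win_j.
have j_succ : j = j.-1.+1 by rewrite prednK // addn_gt0 tr_s_gt0 orbT.
rewrite j_succ; apply: in_bjoinr; apply: in_bigjoin (@map_f _ _ _ _ k _) _.
  by rewrite mem_filter mem_enum andbT dl_k -j_succ /phi_at win_j phi_w leq_addl.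
rewrite -j_succ /trans_term win_j phi_w leq_addl addnK /j addnK.
by apply: (lstm_hat_sound e Chat_sound _ Hh); rewrite mem_enum.
Qed.

Lemma in_Hf_derivation sts rest f dl :
  all (step_ok T) sts -> x = src sts ++ rest -> size (src sts) < f ->
  (forall k, dl k = count (applies k) sts) ->
  in_box R d (Hf f (size (src sts)) (size (tgt sts)) dl) (lstm (tgt sts) 0).
Proof.
elim/last_ind: sts rest f dl => [|sts st IH] rest [|f] dl //=.
  move=> _ _ _ dl0; have -> : [forall k, dl k == 0] by apply/forallP => k; rewrite dl0.
  exact/in_alpha/mem_head.
rewrite all_rcons src_rcons tgt_rcons lstm_cat => /andP[st_ok sts_ok] x_eq.
case: st st_ok x_eq => [a|k w w'] /= st_ok x_eq f_gt dl_eq.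
  rewrite !size_cat !addn1; apply: in_Hf_keep (IH (a :: rest) _ _ _ _ _ _).
  - by rewrite x_eq -catA.
  - exact: sts_ok.
  - by rewrite x_eq -catA.
  - by rewrite size_cat addn1 in f_gt.
  - by move=> k; rewrite dl_eq -cats1 count_cat addn0.
case/andP: st_ok => /phiS_fSP fSP /fSP [tw [tw' [w_eq w'_eq phi_w fw']]]; subst w w'.
rewrite !size_cat !size_tuple.
apply: (in_Hf_apply (rest := rest)) phi_w fw' _ (IH (tw ++ rest) _ _ _ _ _ _).
- by rewrite x_eq -catA.
- by rewrite dl_eq -cats1 count_cat /= eqxx addn0 addn1.
- exact: sts_ok.
- by rewrite x_eq -catA.
- by rewrite size_cat size_tuple in f_gt; have := tr_s_gt0 k; lia.
- move=> k'; rewrite /decr; case: eqVneq => [->|k'k]; rewrite dl_eq -cats1 count_cat /=.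
    by rewrite eqxx addn0 addn1.
  by move: k'k; rewrite eq_sym => /negbTE ->; lia.
Qed.

Variable delta : 'I_n -> nat.
Local Notation Fhat := (Fhat R Sigma m d e Chat n T delta x).

Lemma in_Fhat (g : {ffun 'I_n -> 'I_(delta_max n delta).+1}) i h :
  (forall k, g k <= delta k) -> i <= Imax Sigma n T delta x ->
  in_box R d (Hhat (size x) i (fun k => g k)) h -> in_box R d Fhat h.
Proof.
move=> g_le i_le; apply: in_bigjoin; rewrite /DS allpairs_mapl.
apply/allpairsP; exists (g, i); split => //; last by rewrite mem_iota.
by rewrite mem_filter mem_enum andbT; apply/forallP.
Qed.

Lemma Fhat_sound z : in_pspace Sigma n T delta x z -> in_box R d Fhat (lstm z 0).
Proof.
case/in_pspace_derivation => sts [sts_ok src_x tgt_z nb_le].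
pose g : {ffun 'I_n -> 'I_(delta_max n delta).+1} :=
  [ffun k => inord (count (applies k) sts)].
have gE k : g k = count (applies k) sts :> nat.
  by rewrite ffunE inordK // ltnS (leq_trans (nb_le k)) // leq_bigmax.
have Hz : in_box R d (Hhat (size x) (size z) (fun k => g k)) (lstm z 0).
  have := @in_Hf_derivation sts [::] (size x).+1 (fun k => g k) sts_ok.
  by rewrite cats0 src_x tgt_z; apply.
have /Hf_balance balance : isSome (Hhat (size x) (size z) (fun k => g k)).
  by case: Hhat Hz.
apply: in_Fhat Hz => [k|]; first by rewrite gE.
have : dot (fun k => g k) sz_out <= \sum_(k < n) delta k * tr_t (T k).
  by apply: leq_sum => k _; rewrite gE leq_mul2r nb_le orbT.
by rewrite /Imax; lia.
Qed.

End Recursion.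

Lemma card_ord_leq N D : #|[pred i : 'I_N | i <= D]| <= D.+1.
Proof.
rewrite cardE -(size_map val) -[D.+1](size_iota 0).
apply: uniq_leq_size => [|y /mapP[i]]; first by rewrite (map_inj_uniq val_inj) enum_uniq.
by rewrite mem_enum inE => i_le ->; rewrite mem_iota.
Qed.

Lemma size_DS n (delta : 'I_n -> nat) : size (DS n delta) <= \prod_(k < n) (delta k).+1.
Proof.
pose F k := [pred i : 'I_(delta_max n delta).+1 | i <= delta k].
have -> : size (DS n delta) = #|(family F : simpl_pred {ffun 'I_n -> _})|.
  rewrite /DS size_map cardE /enum_mem -filter_predI; congr size.
  by apply: eq_filter => g /=; rewrite andbT; apply/forallP/familyP.
rewrite card_family foldrE big_map big_enum /=.
by apply: leq_prod => k _; exact: card_ord_leq.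
Qed.

Lemma sum_single_support_le (I : eqType) (r : seq I) (F : I -> nat) t :
  uniq r -> (forall i, F i <= t) -> (forall i j, 0 < F i -> 0 < F j -> i = j) ->
  \sum_(i <- r) F i <= t.
Proof.
move=> r_uniq F_le F_single; case: (boolP (has (fun i => 0 < F i) r)).
  case/hasP=> i ri Fi; rewrite (bigD1_seq i) //= big1 ?addn0 // => j ji.
  by apply/eqP; rewrite -leqn0 leqNgt; apply: contra ji => /F_single/(_ Fi) ->.
move/hasPn=> F0; rewrite big1_seq // => i /andP[_ /F0].
by rewrite lt0n negbK => /eqP.
Qed.

Section Cost.
Variables (R : realFieldType) (Sigma : finType) (m d : nat).
Variables (e : Sigma -> 'rV[R]_m).
Variable Chat : option (box R m) -> option (box R d) -> option (box R d).
Variables (n : nat) (T : 'I_n -> trans Sigma) (x : seq Sigma).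
Hypothesis Chat_bot : forall Be, Chat Be None = None.

Local Notation cost_entry := (cost_entry R Sigma m d e Chat n T x).

Lemma cost_column_le j dl N :
  \sum_(0 <= i < N) cost_entry j.+1 i dl <= 1 + \sum_(k < n) tr_t (T k).
Proof.
rewrite /Defs.cost_entry big_split /= exchange_big /=; apply: leq_add.
  apply: sum_single_support_le => [|[|i]|[|i] [|i'] //]; first exact: iota_uniq.
  - by [].
  - exact: leq_b1.
  - by rewrite !lt0b => /(Hhat_unique Chat_bot) Hi /Hi ->.
apply: leq_sum => k _; apply: sum_single_support_le => [|i|i i']; first exact: iota_uniq.
  by case: ifP.
case: ifP => // /and5P[_ _ _ t_le Hi] _; case: ifP => // /and5P[_ _ _ t_le' Hi'] _.
by have := Hhat_unique Chat_bot Hi Hi'; lia.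
Qed.

Lemma total_cost_le delta :
  total_cost R Sigma m d e Chat n T delta x
    <= size (DS n delta) * (size x * (1 + \sum_(k < n) tr_t (T k))).
Proof.
have column_sum dl : \sum_(1 <= j < (size x).+1)
    \sum_(0 <= i < (Imax Sigma n T delta x).+1) cost_entry j i dl
      <= size x * (1 + \sum_(k < n) tr_t (T k)).
  rewrite big_add1 succnK.
  apply: (@leq_trans (\sum_(0 <= j < size x) (1 + \sum_(k < n) tr_t (T k)))).
    by apply: leq_sum => j _; exact: cost_column_le.
  by rewrite sum_nat_const_nat subn0.
apply: (@leq_trans (\sum_(dl <- DS n delta) size x * (1 + \sum_(k < n) tr_t (T k)))).
  by apply: leq_sum => dl _; exact: column_sum.
by rewrite big_const_seq count_predT iter_addn_0 mulnC.
Qed.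

End Cost.

Theorem theorem4p2 :
  (forall (R : realFieldType) (Sigma : finType) (m d : nat)
          (e : Sigma -> 'rV[R]_m) (C : 'rV[R]_m -> 'rV[R]_d -> 'rV[R]_d)
          (Chat : option (box R m) -> option (box R d) -> option (box R d))
          (n : nat) (T : 'I_n -> trans Sigma) (delta : 'I_n -> nat)
          (x : seq Sigma),
     (forall k, 0 < tr_s (T k)) ->
     sound_abstract_cell R m d C Chat ->
     forall z : seq Sigma, in_pspace Sigma n T delta x z ->
       in_box R d (Fhat R Sigma m d e Chat n T delta x) (lstm R Sigma m d e C z 0%R))
  /\
  (forall K : nat, exists c : nat,
     forall (R : realFieldType) (Sigma : finType) (m d : nat)
            (e : Sigma -> 'rV[R]_m) (C : 'rV[R]_m -> 'rV[R]_d -> 'rV[R]_d)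
            (Chat : option (box R m) -> option (box R d) -> option (box R d))
            (n : nat) (T : 'I_n -> trans Sigma) (delta : 'I_n -> nat)
            (x : seq Sigma),
       (forall k, 0 < tr_s (T k)) ->
       sound_abstract_cell R m d C Chat ->
       (forall k, tr_s (T k) <= K /\ tr_t (T k) <= K) ->
       total_cost R Sigma m d e Chat n T delta x
         <= c * size x * maxn 1 n * \prod_(k < n) (delta k).+1).
Proof.
split=> [R Sigma m d e C Chat n T delta x s_gt0 [Chat_sound _ Chat_bot] z|K].
  exact: Fhat_sound.
exists K.+1 => R Sigma m d e C Chat n T delta x _ [_ _ Chat_bot] sizes_le.
have t_sum : \sum_(k < n) tr_t (T k) <= n * K.
  rewrite -[n in n * K]card_ord -sum_nat_const.
  by apply: leq_sum => k _; case: (sizes_le k).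
have n_le : n * K <= maxn 1 n * K by rewrite leq_mul2r leq_maxr orbT.
apply: leq_trans (total_cost_le e T x Chat_bot delta) _.
have M_gt0 : 0 < maxn 1 n by rewrite leq_maxl.
have cell_le : 1 + \sum_(k < n) tr_t (T k) <= K.+1 * maxn 1 n by lia.
apply: leq_trans (leq_mul (size_DS delta) (leq_mul (leqnn (size x)) cell_le)) _.
by rewrite mulnC !mulnA; lia.
Qed.
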